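(* Let $\beta=(\beta_1,\ldots,\beta_\ell)$ be a composition of $N$ and let $\mathcal{Q}_\beta$ be the corresponding parabolic subposet of $1<\cdots<N$. Then $\mathcal{P}\mapsto\mathrm{fat}_\beta(\mathcal{P})$ is a bijection from the set of subposets of the total order $1<2<\cdots<\ell$ onto the set of Levi compatible subposets of $\mathcal{Q}_\beta$.
   Context: Fix a prime power $q$ and the finite field $\mathbb{F}_q$; $\mathrm{GL}_N=\mathrm{GL}_N(\mathbb{F}_q)$. A subposet of a poset $(X,\prec_{\mathcal{R}})$ is a strict partial order $\prec_{\mathcal{P}}$ on the same set with $a\prec_{\mathcal{P}}b\Rightarrow a\prec_{\mathcal{R}}b$. For a subposet $\mathcal{R}$ of $1<\cdots<N$, $\mathfrak{ut}_{\mathcal{R}}=\{x\in M_N(\mathbb{F}_q)\mid x_{ab}\ne0\Rightarrow a\prec_{\mathcal{R}}b\}$ and $\mathrm{UT}_{\mathcal{R}}=\mathrm{Id}_N+\mathfrak{ut}_{\mathcal{R}}$. For a composition $\beta=(\beta_1,\ldots,\beta_\ell)$ of $N$ let $\mathcal{Q}_i=\{\beta_1+\cdots+\beta_{i-1}+1,\ldots,\beta_1+\cdots+\beta_i\}$, and let $\mathcal{Q}_\beta$ be the poset on $\{1,\ldots,N\}$ with $a\prec b$ iff $a\in\mathcal{Q}_i,b\in\mathcal{Q}_j$, $i<j$. Let $L_\beta\cong\mathrm{GL}_{\beta_1}\times\cdots\times\mathrm{GL}_{\beta_\ell}$ be the block-diagonal subgroup of $\mathrm{GL}_N$ with diagonal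 blocks indexed by $\mathcal{Q}_1,\ldots,\mathcal{Q}_\ell$. A subposet $\mathcal{R}$ of $\mathcal{Q}_\beta$ is Levi compatible if $L_\beta\subseteq N_{\mathrm{GL}_N}(\mathrm{UT}_{\mathcal{R}})$. For a subposet $\mathcal{P}$ of $1<\cdots<\ell$, $\mathrm{fat}_\beta(\mathcal{P})$ is the subposet of $\mathcal{Q}_\beta$ with $a\prec b$ iff $a\in\mathcal{Q}_i$, $b\in\mathcal{Q}_j$ with $i\prec_{\mathcal{P}}j$. *)

From HB Require Import structures.
From mathcomp Require Import all_boot all_order all_algebra all_fingroup all_field.
Set Implicit Arguments. Unset Strict Implicit. Unset Printing Implicit Defensive.
Import GRing.Theory.
Local Open Scope ring_scope.

(* Relations on a finite set T are represented as sets of pairs: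
   (a, b) \in R  means  a <_R b. *)

Definition strict_po (T : finType) (R : {set T * T}) : Prop :=
  (forall a, (a, a) \notin R) /\
  (forall a b c, (a, b) \in R -> (b, c) \in R -> (a, c) \in R).

Definition subposet (T : finType) (P R : {set T * T}) : Prop :=
  strict_po P /\ P \subset R.

(* the total order 0 < 1 < ... < n-1 on 'I_n (i.e. 1 < ... < n, shifted) *)
Definition total_order (n : nat) : {set 'I_n * 'I_n} :=
  [set p : 'I_n * 'I_n | (p.1 < p.2)%N].

(* index a (0-based) lies in the i-th block Q_i (0-based) of the composition beta *)
Definition inQ (beta : seq nat) (i a : nat) : bool :=
  (sumn (take i beta) <= a < sumn (take i.+1 beta))%N.

Definition Qbeta (beta : seq nat) (N : nat) : {set 'I_N * 'I_N} :=
  [set p : 'I_N * 'I_N | [exists i : 'I_(size beta), exists j : 'I_(size beta),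
             [&& (i < j)%N, inQ beta i p.1 & inQ beta j p.2]]].

Definition fat (beta : seq nat) (N : nat) (P : {set 'I_(size beta) * 'I_(size beta)})
  : {set 'I_N * 'I_N} :=
  [set p : 'I_N * 'I_N | [exists i : 'I_(size beta), exists j : 'I_(size beta),
             [&& (i, j) \in P, inQ beta i p.1 & inQ beta j p.2]]].

Definition ut (F : finFieldType) (N : nat) (R : {set 'I_N * 'I_N}) : {set 'M[F]_N} :=
  [set x : 'M[F]_N | [forall a, forall b, (x a b != 0) ==> ((a, b) \in R)]].

Definition UT (F : finFieldType) (N : nat) (R : {set 'I_N * 'I_N}) : {set 'M[F]_N} :=
  [set 1%:M + x | x in ut F R].

Definition in_Levi (F : finFieldType) (beta : seq nat) (N : nat) (g : 'M[F]_N) : Prop :=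
  g \in unitmx /\
  (forall a b : 'I_N, g a b != 0 ->
     exists i : 'I_(size beta), inQ beta i a && inQ beta i b).

Definition normalizes (F : finFieldType) (N : nat) (g : 'M[F]_N) (S : {set 'M[F]_N}) : Prop :=
  [set g *m u *m invmx g | u in S] = S.

Definition Levi_compatible (F : finFieldType) (beta : seq nat) (N : nat)
  (R : {set 'I_N * 'I_N}) : Prop :=
  subposet R (Qbeta beta N) /\
  (forall g : 'M[F]_N, in_Levi beta g -> normalizes g (UT F R)).

Arguments fat beta N P : clear implicits.
Arguments Levi_compatible F beta N R : clear implicits.

From HB Require Import structures.
From mathcomp Require Import all_boot all_order all_algebra all_fingroup all_field.
From mathcomp Require Import zify.
Set Implicit Arguments. Unset Strict Implicit. Unset Printing Implicit Defensive.
Import GRing.Theory.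

(** Whether (a, b) lies in fat_beta(P) depends only on the blocks containing a
   and b, so fat is injective (test it on the first index of each block) and
   its image consists of the relations closed under moving endpoints within
   their blocks.  Block-diagonal matrices preserve the zero pattern of
   ut(fat P), which gives Levi compatibility.  Conversely, a Levi compatible R
   is block closed: if (a', b') is in R, with a, a' in one block and b, b' in
   another, conjugating 1 + E_(a'b') by the permutation matrix of (a a')(b b'),
   which lies in L_beta, gives an element of UT_R with nonzero (a, b) entry. *)

Section Blocks.

Variable beta : seq nat.

Lemma leq_sumn_take m n : (m <= n)%N -> (sumn (take m beta) <= sumn (take n beta))%N.
Proof. by move=> /subnKC <-; rewrite takeD sumn_cat leq_addr. Qed.

Lemma inQ_inj a i j : inQ beta i a -> inQ beta j a -> i = j.
Proof.
rewrite /inQ => /andP[ia1 ia2] /andP[ja1 ja2].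
by case: (ltngtP i j) => // /leq_sumn_take; lia.
Qed.

Lemma inQ_exists a : (a < sumn beta)%N -> exists2 i, (i < size beta)%N & inQ beta i a.
Proof.
elim: beta a => [|b s IH] a //=.
case: (ltnP a b) => [ab _|ba ha]; first by exists 0%N => //; rewrite /inQ /=; lia.
have [i lti ia] := IH (a - b)%N ltac:(lia).
by exists i.+1 => //; move: ia; rewrite /inQ /=; lia.
Qed.

Lemma inQ_sumn_take i : (0 < nth 0 beta i)%N -> inQ beta i (sumn (take i beta)).
Proof.
case: (ltnP i (size beta)) => [lti|/(nth_default 0%N) ->] // pos.
by rewrite /inQ (take_nth 0%N lti) sumn_rcons leqnn /=; lia.
Qed.

Definition same_block (x y : nat) := forall k, inQ beta k x = inQ beta k y.

Lemma inQ_same_block i x y : inQ beta i x -> inQ beta i y -> same_block x y.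
Proof.
move=> ix iy k; apply/idP/idP => [kx|ky].
- by rewrite (inQ_inj kx ix).
- by rewrite (inQ_inj ky iy).
Qed.

Definition block_closed N (R : {set 'I_N * 'I_N}) :=
  forall a b a' b' : 'I_N,
    (a', b') \in R -> same_block a a' -> same_block b b' -> (a, b) \in R.

Variable N : nat.
Hypothesis sum_beta : sumn beta = N.

Lemma inQ_ord (a : 'I_N) : exists i : 'I_(size beta), inQ beta i a.
Proof.
have [i lti ia] := @inQ_exists a ltac:(rewrite sum_beta; exact: ltn_ord).
by exists (Ordinal lti).
Qed.

Lemma mem_fatE P (a b : 'I_N) (i j : 'I_(size beta)) :
  inQ beta i a -> inQ beta j b -> ((a, b) \in fat beta N P) = ((i, j) \in P).
Proof.
move=> ia jb; rewrite inE; apply/existsP/idP => [[i' /existsP[j' /and3P[]]]|ijP].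
- by move=> + i'a j'b; rewrite (val_inj (inQ_inj ia i'a)) (val_inj (inQ_inj jb j'b)).
- by exists i; apply/existsP; exists j; rewrite ijP ia jb.
Qed.

Lemma Qbeta_fat : Qbeta beta N = fat beta N (total_order (size beta)).
Proof.
by apply/setP => p; rewrite !inE; do 2 apply: eq_existsb => ?; rewrite inE.
Qed.

Lemma fat_block_closed P : block_closed (fat beta N P).
Proof.
move=> a b a' b' abP aa' bb'.
have [i ia'] := inQ_ord a'; have [j jb'] := inQ_ord b'.
have ia : inQ beta i a by rewrite aa'.
have jb : inQ beta j b by rewrite bb'.
by rewrite (mem_fatE _ ia jb) -(mem_fatE _ ia' jb').
Qed.

Lemma fat_subposet P : subposet P (total_order (size beta)) ->
  subposet (fat beta N P) (Qbeta beta N).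
Proof.
case=> -[Pirr Ptr] Plt; rewrite Qbeta_fat; split; first split.
- move=> a; have [i ia] := inQ_ord a.
  by rewrite (mem_fatE _ ia ia) Pirr.
- move=> a b c; have [i ia] := inQ_ord a; have [j jb] := inQ_ord b.
  have [k kc] := inQ_ord c.
  rewrite (mem_fatE _ ia jb) (mem_fatE _ jb kc) (mem_fatE _ ia kc); exact: Ptr.
- apply/subsetP => -[a b]; have [i ia] := inQ_ord a; have [j jb] := inQ_ord b.
  by rewrite (mem_fatE _ ia jb) (mem_fatE _ ia jb); apply/subsetP.
Qed.

Lemma fat_inj : all (fun b => 0 < b)%N beta -> injective (fat beta N).
Proof.
move=> pos P1 P2 eqP12; apply/setP => -[i j].
have start (k : 'I_(size beta)) : exists a : 'I_N, inQ beta k a.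
  have kpos : (0 < nth 0 beta k)%N by exact: (all_nthP 0%N pos).
  have ltkN : (sumn (take k beta) < N)%N.
    have := leq_sumn_take (ltn_ord k); rewrite take_size sum_beta.
    by move: (inQ_sumn_take kpos) => /andP[_]; apply: leq_trans.
  by exists (Ordinal ltkN); exact: inQ_sumn_take.
have [a ia] := start i; have [b jb] := start j.
by rewrite -(mem_fatE P1 ia jb) eqP12 (mem_fatE _ ia jb).
Qed.

Definition block_rel (R : {set 'I_N * 'I_N}) : {set 'I_(size beta) * 'I_(size beta)} :=
  [set p : 'I_(size beta) * 'I_(size beta) | [exists a : 'I_N, exists b : 'I_N,
             [&& (a, b) \in R, inQ beta p.1 a & inQ beta p.2 b]]].

Lemma block_closed_fat (R : {set 'I_N * 'I_N}) : block_closed R ->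
  R = fat beta N (block_rel R).
Proof.
move=> Rc; apply/setP => -[a b]; have [i ia] := inQ_ord a; have [j jb] := inQ_ord b.
rewrite (mem_fatE _ ia jb) inE; apply/idP/existsP => [abR|[a' /existsP[b' /and3P[]]]].
- by exists a; apply/existsP; exists b; rewrite abR ia jb.
- by move=> abR ia' jb'; exact: Rc abR (inQ_same_block ia ia') (inQ_same_block jb jb').
Qed.

Lemma block_rel_subposet (R : {set 'I_N * 'I_N}) :
  subposet R (Qbeta beta N) -> block_closed R ->
  subposet (block_rel R) (total_order (size beta)).
Proof.
move=> [[_ Rtr] RQ] Rc.
have lt_of_R i j : (i, j) \in block_rel R -> (i < j)%N.
  rewrite inE => /existsP[a /existsP[b /and3P[abR ia jb]]].
  by move: (subsetP RQ _ abR); rewrite Qbeta_fat (mem_fatE _ ia jb) inE.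
split; first split.
- by move=> i; apply/negP => /lt_of_R; rewrite ltnn.
- move=> i j k; rewrite !inE => /existsP[a /existsP[b /and3P[abR ia jb]]].
  move=> /existsP[b' /existsP[c /and3P[bcR jb' kc]]].
  have bcR' : (b, c) \in R by exact: Rc bcR (inQ_same_block jb jb') (fun=> erefl).
  by apply/existsP; exists a; apply/existsP; exists c; rewrite (Rtr _ _ _ abR bcR') ia kc.
- by apply/subsetP => -[i j] /lt_of_R; rewrite inE.
Qed.

End Blocks.

Section Levi.

Variables (F : finFieldType) (beta : seq nat) (N : nat).
Hypothesis sum_beta : sumn beta = N.
Local Open Scope ring_scope.

Definition block_diag (g : 'M[F]_N) :=
  forall a b : 'I_N, g a b != 0 -> exists i : 'I_(size beta), inQ beta i a && inQ beta i b.

Definition block_proj (k : nat) : 'M[F]_N := diag_mx (\row_c (inQ beta k c)%:R).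

Lemma block_diag_proj_comm g k : block_diag g -> g *m block_proj k = block_proj k *m g.
Proof.
move=> gbd; apply/matrixP => x y; rewrite mul_mx_diag mul_diag_mx !mxE.
case: (eqVneq (g x y) 0) => [->|/gbd[i /andP[ix iy]]]; first by rewrite mul0r mulr0.
by rewrite (inQ_same_block ix iy k) mulrC.
Qed.

Lemma block_diag_invmx g : g \in unitmx -> block_diag g -> block_diag (invmx g).
Proof.
move=> gu gbd x y gxy; have [k ky] := inQ_ord sum_beta y.
exists k; rewrite ky andbT.
have projV : block_proj k *m invmx g = invmx g *m block_proj k.
  by rewrite -{2}[block_proj k](mulmxK gu) -(block_diag_proj_comm _ gbd) -mulmxA mulKmx.
move/matrixP: projV => /(_ x y); rewrite mul_mx_diag mul_diag_mx !mxE ky mulr1.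
by case: (inQ beta k x) => // /esym/eqP; rewrite mul0r (negbTE gxy).
Qed.

Lemma block_diag_conj_ut P g h x : block_diag g -> block_diag h ->
  x \in ut F (fat beta N P) -> g *m x *m h \in ut F (fat beta N P).
Proof.
move=> gbd hbd xut; rewrite inE; apply/forallP => a; apply/forallP => b; apply/implyP.
apply: contraR => abN; rewrite mxE big1 // => d _; rewrite mxE big_distrl big1 // => c _ /=.
case: (eqVneq (g a c) 0) => [->|/gbd[i /andP[ia ic]]]; first by rewrite !mul0r.
case: (eqVneq (h d b) 0) => [->|/hbd[j /andP[jd jb]]]; first by rewrite mulr0.
suff -> : x c d = 0 by rewrite mulr0 mul0r.
apply/eqP; apply: contraNT abN => xcd.
have cdP : (c, d) \in fat beta N P.
  by move: xut; rewrite inE => /forallP/(_ c)/forallP/(_ d)/implyP; apply.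
exact: fat_block_closed cdP (inQ_same_block ia ic) (inQ_same_block jb jd).
Qed.

Lemma normalizes_of_conj_closed g (S : {set 'M[F]_N}) : g \in unitmx ->
  (forall u, u \in S -> g *m u *m invmx g \in S) -> normalizes g S.
Proof.
move=> gu Sconj; have conj_inj : injective (fun u : 'M[F]_N => g *m u *m invmx g).
  by move=> u v /(congr1 (fun M => invmx g *m (M *m g))); rewrite /= !mulmxKV // !mulKmx.
apply/eqP; rewrite eqEcard (card_imset _ conj_inj) leqnn andbT.
by apply/subsetP => _ /imsetP[u uS ->]; exact: Sconj.
Qed.

Lemma fat_Levi_compatible P : subposet P (total_order (size beta)) ->
  Levi_compatible F beta N (fat beta N P).
Proof.
move=> Ppo; split; first exact: fat_subposet.
move=> g [gu gbd]; apply: normalizes_of_conj_closed (gu) _ => _ /imsetP[x xut ->].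
apply/imsetP; exists (g *m x *m invmx g).
  exact: block_diag_conj_ut gbd (block_diag_invmx gu gbd) xut.
by rewrite mulmxDr mulmxDl mulmx1 mulmxV.
Qed.

Lemma invmx_perm_mx (s : {perm 'I_N}) : invmx (perm_mx s) = perm_mx s^-1 :> 'M[F]_N.
Proof.
have := mulKmx (unitmx_perm F s) (perm_mx s^-1).
by rewrite -perm_mxM mulgV perm_mx1 mulmx1.
Qed.

Lemma perm_mx_conjE (s : {perm 'I_N}) (M : 'M[F]_N) a b :
  (perm_mx s *m M *m invmx (perm_mx s)) a b = M (s a) (s b).
Proof. by rewrite invmx_perm_mx -col_permE -row_permE !mxE. Qed.

Lemma perm_mx_in_Levi (s : {perm 'I_N}) :
  (forall x, same_block beta (s x) x) -> in_Levi beta (perm_mx s : 'M[F]_N).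
Proof.
move=> sblk; split=> [|x y]; first exact: unitmx_perm.
rewrite !mxE; case: (eqVneq (s x) y) => [<- _|]; last by rewrite eqxx.
by have [i ix] := inQ_ord sum_beta x; exists i; rewrite sblk ix.
Qed.

Lemma mem_UT_offdiag R (v : 'M[F]_N) a b :
  v \in UT F R -> a != b -> v a b != 0 -> (a, b) \in R.
Proof.
case/imsetP => x xut -> ab; rewrite !mxE (negbTE ab) add0r.
by move: xut; rewrite inE => /forallP/(_ a)/forallP/(_ b)/implyP.
Qed.

Lemma tperm_same_block (c d x : 'I_N) :
  same_block beta c d -> same_block beta (tperm c d x) x.
Proof. by move=> cd k; case: tpermP => [->|->|//]; rewrite cd. Qed.

Lemma Levi_compatible_block_closed R : Levi_compatible F beta N R -> block_closed beta R.
Proof.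
move=> [[_ RQ] Rnorm] a b a' b' abR aa' bb'.
have [i ia'] := inQ_ord sum_beta a'; have [j jb'] := inQ_ord sum_beta b'.
have ia : inQ beta i a by rewrite aa'.
have jb : inQ beta j b by rewrite bb'.
have ij : (i < j)%N.
  by move: (subsetP RQ _ abR); rewrite Qbeta_fat (mem_fatE _ ia' jb') inE.
have neq (x y : 'I_N) : inQ beta i x -> inQ beta j y -> x != y.
  move=> ix jy; apply/eqP => exy.
  by move: jy ij; rewrite -exy => /(inQ_inj ix) ->; rewrite ltnn.
pose s := (tperm a a' * tperm b b')%g.
have sa : s a = a' by rewrite permM tpermL tpermD // eq_sym neq.
have sb : s b = b' by rewrite permM (tpermD (neq _ _ ia jb) (neq _ _ ia' jb)) tpermL.
have sL : in_Levi beta (perm_mx s : 'M[F]_N).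
  by apply: perm_mx_in_Levi => x k; rewrite permM !tperm_same_block.
set u : 'M[F]_N := 1%:M + delta_mx a' b'.
have uU : u \in UT F R.
  apply/imsetP; exists (delta_mx a' b') => //; rewrite inE.
  apply/forallP => x; apply/forallP => y; apply/implyP; rewrite mxE.
  by case: (eqVneq x a') => [->|]; case: (eqVneq y b') => [->|] //=; rewrite eqxx.
have : perm_mx s *m u *m invmx (perm_mx s) \in UT F R.
  by rewrite -(Rnorm _ sL); apply: imset_f.
move/mem_UT_offdiag => /(_ a b (neq _ _ ia jb)); apply.
by rewrite perm_mx_conjE sa sb !mxE (negbTE (neq _ _ ia' jb')) !eqxx add0r oner_neq0.
Qed.

End Levi.

Theorem mainTheorem3 (F : finFieldType) (N : nat) (beta : seq nat)
  (hpos : all (fun b => 0 < b)%N beta) (hsum : sumn beta = N) :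
  (forall P : {set 'I_(size beta) * 'I_(size beta)},
     subposet P (total_order (size beta)) -> Levi_compatible F beta N (fat beta N P)) /\
  (forall P1 P2 : {set 'I_(size beta) * 'I_(size beta)},
     subposet P1 (total_order (size beta)) -> subposet P2 (total_order (size beta)) ->
     fat beta N P1 = fat beta N P2 -> P1 = P2) /\
  (forall R : {set 'I_N * 'I_N}, Levi_compatible F beta N R ->
     exists2 P : {set 'I_(size beta) * 'I_(size beta)},
       subposet P (total_order (size beta)) & R = fat beta N P).
Proof.
split; first exact: fat_Levi_compatible.
split=> [P1 P2 _ _|R RL]; first exact: fat_inj.
have Rc := Levi_compatible_block_closed hsum RL.
exists (block_rel beta R); first exact: block_rel_subposet RL.1 Rc.
exact: block_closed_fat.
Qed.
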